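(* For every integer $k$ and every integer $n\geq 1$, \[ b_{n}^{(k)}(x+1)-b_{n}^{(k)}(x)=\sum_{p=1}^{n}\sum_{m=1}^{p}\binom{n}{p}\frac{(-1)^{m+p}\,m!}{m^{k}}S_{2}(p,m)\,b_{n-p}(x). \]
   Context: For $k\in\mathbb{Z}$, the polylogarithm is $Li_k(x)=\sum_{n=1}^{\infty}\frac{x^n}{n^k}$. The poly-Bernoulli polynomials of the second kind $b_n^{(k)}(x)$ are defined by the generating function \[ \frac{Li_{k}(1-e^{-t})}{\log(1+t)}(1+t)^{x}=\sum_{n=0}^{\infty}b_{n}^{(k)}(x)\frac{t^{n}}{n!}. \] The Bernoulli polynomials of the second kind $b_n(x)$ are defined by $\frac{t}{\log(1+t)}(1+t)^x=\sum_{n=0}^{\infty}b_n(x)\frac{t^n}{n!}$. $S_2(n,l)$ denotes the Stirling numbers of the second kind, defined by $x^n=\sum_{l=0}^{n}S_2(n,l)(x)_l$, where $(x)_l=x(x-1)\cdots(x-l+1)$. *)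

(* Formal power series are coefficient sequences nat -> R
   over a numFieldType R (characteristic 0, so n! is invertible). *)
From mathcomp Require Import all_boot all_order all_algebra.
Set Implicit Arguments. Unset Strict Implicit. Unset Printing Implicit Defensive.
Import Order.TTheory GRing.Theory Num.Theory.
Local Open Scope ring_scope.

Section FPS.
Variable R : numFieldType.

Definition fps := nat -> R.

Definition fps_one : fps := fun n => if n is 0%N then 1 else 0.

Definition fps_mul (a b : fps) : fps :=
  fun n => \sum_(i < n.+1) a i * b (n - i)%N.

Definition fps_exp (a : fps) (m : nat) : fps := iter m (fps_mul a) fps_one.

(* Multiplicative inverse of a series with constant term 1:
   c_0 = 1, c_n = - sum_{i=1}^n a_i c_{n-i}. *)
Fixpoint fps_inv_seq (a : fps) (n : nat) : seq R :=
  match n with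
  | 0%N => [:: 1]
  | n'.+1 => let s := fps_inv_seq a n' in
             rcons s (- \sum_(i < n'.+1) a i.+1 * nth 0 s (n' - i)%N)
  end.
Definition fps_inv (a : fps) : fps := fun n => nth 0 (fps_inv_seq a n) n.

Definition one_minus_exp_neg : fps :=
  fun n => if n is 0%N then 0 else (-1) ^+ n.+1 / (n`!)%:R.

Definition log1p_div_t : fps := fun n => (-1) ^+ n / (n.+1)%:R.

Definition t_div_log1p : fps := fps_inv log1p_div_t.

Definition binom_series (x : R) : fps :=
  fun j => (\prod_(i < j) (x - i%:R)) / (j`!)%:R.

(* Li_k(1 - e^{-t}) = sum_{m>=1} (1-e^{-t})^m / m^k ; the coefficient of t^n
   only involves m <= n since (1-e^{-t})^m = O(t^m). *)
Definition polylog_1me (k : int) : fps :=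
  fun n => \sum_(1 <= m < n.+1) fps_exp one_minus_exp_neg m n / (m%:R ^ k).

(* Li_k(1-e^{-t}) / t  (Li_k(1-e^{-t}) has zero constant term) *)
Definition polylog_1me_div_t (k : int) : fps := fun n => polylog_1me k n.+1.

Definition bern2 (n : nat) (x : R) : R :=
  (n`!)%:R * fps_mul t_div_log1p (binom_series x) n.

(* Poly-Bernoulli polynomials of the second kind:
   Li_k(1-e^{-t})/log(1+t) (1+t)^x
     = (Li_k(1-e^{-t})/t) * (t/log(1+t)) * (1+t)^x
     = sum_n b_n^(k)(x) t^n/n! *)
Definition poly_bern2 (k : int) (n : nat) (x : R) : R :=
  (n`!)%:R *
  fps_mul (fps_mul (polylog_1me_div_t k) t_div_log1p) (binom_series x) n.

End FPS.

(* Stirling numbers of the second kind (standard recurrence, equivalent to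
   x^n = sum_l S2(n,l) (x)_l). *)
Fixpoint stirling2 (n m : nat) : nat :=
  match n, m with
  | 0, 0 => 1
  | 0, _.+1 => 0
  | _.+1, 0 => 0
  | n'.+1, m'.+1 => (m'.+1 * stirling2 n' m'.+1 + stirling2 n' m')%N
  end.

(* Since (1+t)^(x+1) - (1+t)^x = t (1+t)^x, the difference of the generating
   functions is t Li_k(1-e^{-t})/log(1+t) (1+t)^x, i.e. the product of
   Li_k(1-e^{-t}) = sum_m (1-e^{-t})^m / m^k with the generating function of
   the b_n(x).  The Stirling numbers enter through
   (1-e^{-t})^m = sum_p (-1)^(m+p) m! S2(p,m) t^p / p!, which follows from
   the differential equation f' = 1 - f satisfied by f = 1 - e^{-t}. *)
From mathcomp Require Import all_boot all_order all_algebra.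
From mathcomp Require Import ring.
Import Order.TTheory GRing.Theory Num.Theory.
Local Open Scope ring_scope.

Section FpsAlgebra.
Variable R : numFieldType.
Implicit Types a b c : fps R.

Definition trunc_poly a (n : nat) : {poly R} := \poly_(i < n.+1) a i.

Lemma coef_trunc_poly a n i : (i <= n)%N -> (trunc_poly a n)`_i = a i.
Proof. by move=> le_in; rewrite coef_poly ltnS le_in. Qed.

Lemma coefM_fps_mul {P Q : {poly R}} {a b n} :
  (forall i, (i <= n)%N -> P`_i = a i) ->
  (forall i, (i <= n)%N -> Q`_i = b i) ->
  forall j, (j <= n)%N -> (P * Q)`_j = fps_mul a b j.
Proof.
move=> Pa Qb j le_jn; rewrite coefM; apply: eq_bigr => i _.
have le_ij : (i <= j)%N by rewrite -ltnS.
by rewrite Pa ?Qb ?(leq_trans le_ij) // (leq_trans (leq_subr i j)).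
Qed.

Lemma coefMl_agree (P P' Q : {poly R}) n :
  (forall i, (i <= n)%N -> P`_i = P'`_i) -> (P * Q)`_n = (P' * Q)`_n.
Proof.
by move=> PP'; rewrite !coefM; apply: eq_bigr => i _; rewrite PP' // -ltnS.
Qed.

Lemma fps_mulA a b c n :
  fps_mul (fps_mul a b) c n = fps_mul a (fps_mul b c) n.
Proof.
have tr d i : (i <= n)%N -> (trunc_poly d n)`_i = d i by apply: coef_trunc_poly.
have trM := coefM_fps_mul (tr a) (tr b).
rewrite -(coefM_fps_mul trM (tr c) n (leqnn n)) -mulrA.
exact: (coefM_fps_mul (tr a) (coefM_fps_mul (tr b) (tr c)) n (leqnn n)).
Qed.

Lemma fps_exp_coef a m N p :
  (p <= N)%N -> fps_exp a m p = ((trunc_poly a N) ^+ m)`_p.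
Proof.
elim: m p => [|m IH] p le_pN.
  by rewrite expr0 coef1; case: p {le_pN}.
rewrite exprS /fps_exp iterS -/(fps_exp a m); symmetry.
apply: (@coefM_fps_mul _ _ _ _ p _ _ p (leqnn p)) => i le_ip.
  by rewrite coef_trunc_poly // (leq_trans le_ip le_pN).
by rewrite IH // (leq_trans le_ip le_pN).
Qed.

(* The hypotheses say b' = (1 + t) b. *)
Lemma fps_mul_shiftr a b b' n :
  b' 0%N = b 0%N -> (forall j, b' j.+1 - b j.+1 = b j) ->
  fps_mul a b' n.+1 - fps_mul a b n.+1 = fps_mul a b n.
Proof.
move=> b'b0 b'b; rewrite /fps_mul -sumrB big_ord_recr /= subnn b'b0 subrr addr0.
by apply: eq_bigr => i _; rewrite -mulrBr subSn ?b'b // -ltnS.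
Qed.

End FpsAlgebra.

Arguments trunc_poly {R}.

Lemma natr_fact_neq0 (R : numFieldType) n : (n`!)%:R != 0 :> R.
Proof. by rewrite pnatr_eq0 -lt0n fact_gt0. Qed.

Lemma binom_series_shift (R : numFieldType) (x : R) j :
  binom_series (x + 1) j.+1 - binom_series x j.+1 = binom_series x j.
Proof.
rewrite /binom_series big_ord_recl big_ord_recr /= subr0.
have -> : \prod_(i < j) (x + 1 - (bump 0 i)%:R) = \prod_(i < j) (x - i%:R).
  by apply: eq_bigr => i _; rewrite /bump add1n -addn1 natrD; ring.
have j1_neq0 : 1 + j%:R != 0 :> R by rewrite -(natrD R 1 j) pnatr_eq0.
rewrite factS natrM invfM; field.
by rewrite natr_fact_neq0 j1_neq0.
Qed.

Section OneMinusExpNeg.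
Variable R : numFieldType.
Local Notation f := (one_minus_exp_neg R).

Lemma one_minus_exp_neg_deriv i : (i.+1)%:R * f i.+1 = (i == 0)%:R - f i.
Proof.
rewrite /one_minus_exp_neg; case: i => [|i].
  by rewrite /= expr2 mulrN1 opprK subr0 mul1r factS muln1 divr1.
have i2_neq0 : 2 + i%:R != 0 :> R by rewrite -(natrD R 2 i) pnatr_eq0.
rewrite sub0r /= factS natrM invfM !exprS; field.
by rewrite natr_fact_neq0 i2_neq0.
Qed.

(* Coefficientwise form of (f^(m+1))' = (m+1) f^m f' = (m+1) f^m (1 - f). *)
Lemma fps_exp_one_minus_exp_neg_rec m p :
  (p.+1)%:R * fps_exp f m.+1 p.+1 =
  (m.+1)%:R * (fps_exp f m p - fps_exp f m.+1 p).
Proof.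
set F := trunc_poly f p.+1.
rewrite !(@fps_exp_coef _ _ _ p.+1) //.
rewrite mulr_natl -coef_deriv deriv_exp /= coefMn mulr_natl; congr (_ *+ _).
rewrite (coefMl_agree _ _ (1 - F)) ?mulrBl ?mul1r ?coefB ?exprS // => i le_ip.
rewrite coef_deriv coefB coef1 !coef_trunc_poly ?ltnS ?(leq_trans le_ip) //.
by rewrite -one_minus_exp_neg_deriv mulr_natl.
Qed.

Lemma fps_exp_one_minus_exp_neg_stirling2 p m :
  (p`!)%:R * fps_exp f m p = (-1) ^+ (m + p) * (m`!)%:R * (stirling2 p m)%:R.
Proof.
elim: p m => [|p IH] [|m].
- by rewrite /= !mulr1.
- by rewrite /fps_exp iterS /fps_mul big_ord1 /= mul0r !mulr0.
- by rewrite /= !mulr0.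
rewrite factS natrM mulrAC fps_exp_one_minus_exp_neg_rec.
transitivity ((m.+1)%:R * (p`!%:R * fps_exp f m p - p`!%:R * fps_exp f m.+1 p)).
  by ring.
rewrite !IH /= natrD natrM factS natrM !addSn !addnS !exprS.
ring.
Qed.

Lemma polylog_1me_div_t_stirling2 (k : int) i :
  (i.+1`!)%:R * polylog_1me_div_t R k i =
  \sum_(1 <= m < i.+2) (-1) ^+ (m + i.+1) * (m`!)%:R / (m%:R ^ k)
                       * (stirling2 i.+1 m)%:R.
Proof.
rewrite /polylog_1me_div_t /polylog_1me mulr_sumr; apply: eq_bigr => m _.
by rewrite mulrA fps_exp_one_minus_exp_neg_stirling2 mulrAC.
Qed.

End OneMinusExpNeg.

Theorem theorem3 (R : numFieldType) (k : int) (n : nat) (x : R) :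
  (1 <= n)%N ->
  poly_bern2 k n (x + 1) - poly_bern2 k n x =
  \sum_(1 <= p < n.+1) \sum_(1 <= m < p.+1)
     ('C(n, p))%:R * ((-1) ^+ (m + p) * (m`!)%:R / (m%:R ^ k))
       * (stirling2 p m)%:R * bern2 (n - p)%N x.
Proof.
case: n => [//|n] _.
rewrite /poly_bern2 -mulrBr fps_mul_shiftr; last 2 first.
- by rewrite /binom_series !big_ord0.
- exact: binom_series_shift.
rewrite fps_mulA {1}/fps_mul mulr_sumr big_add1 big_mkord.
apply: eq_bigr => i _.
have fact_split := bin_fact (ltn_ord i : (i < n.+1)%N).
rewrite subSS in fact_split.
transitivity (('C(n.+1, i.+1))%:R * ((i.+1`!)%:R * polylog_1me_div_t R k i)
              * bern2 (n - i)%N x).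
  by rewrite /bern2 -fact_split !natrM; ring.
rewrite subSS polylog_1me_div_t_stirling2 !mulr_sumr mulr_suml.
by apply: eq_bigr => m _; ring.
Qed.
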